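(* Let $R$ be an inp-minimal integral domain with maximal ideal $\mathfrak M$. If $R$ contains an infinite set $F$ such that $F-F\subseteq R^\times\cup\{0\}$, then $R$ is a valuation ring. In particular: (1) if $R/\mathfrak M$ is infinite then $R$ is a valuation ring; (2) if $R$ has an infinite subring which is a field then $R$ is a valuation ring.
   Context: Rings are commutative with identity. Inp-minimal: the theory of $R$ in the language of rings has burden $1$ (such a domain is local). A domain $R$ is a valuation ring if for every nonzero $x$ in its fraction field, $x\in R$ or $x^{-1}\in R$. *)

From HB Require Import structures.
From mathcomp Require Import all_boot all_algebra.
From mathcomp Require Import fraction.
Set Implicit Arguments. Unset Strict Implicit. Unset Printing Implicit Defensive.
Import GRing.Theory.
Local Open Scope ring_scope.

(* First-order formulas in the language of rings are [GRing.formula R]; the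
   object variable x is 'X_0 and the parameter tuple occupies 'X_1, 'X_2, ...
   So  R |= phi(x; a)  is  [GRing.holds (x :: a) phi]. *)
Definition sat1 (R : idomainType) (phi : GRing.formula R) (x : R) (a : seq R) : Prop :=
  GRing.holds (x :: a) phi.

Definition k_inconsistent (R : idomainType) (phi : GRing.formula R) (k n : nat)
    (a : nat -> seq R) : Prop :=
  forall s : seq nat, uniq s -> size s = k -> all (fun i => i < n)%N s ->
    ~ (exists x : R, forall i, i \in s -> sat1 phi x (a i)).

Definition inp_pattern2 (R : idomainType) (phi psi : GRing.formula R) (k n : nat) : Prop :=
  exists a b : nat -> seq R,
    [/\ k_inconsistent phi k n a, k_inconsistent psi k n b &
        forall i j, (i < n)%N -> (j < n)%N ->
          exists x : R, sat1 phi x (a i) /\ sat1 psi x (b j)].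

(* Th(R) has burden >= 2 (in the variable x), via compactness: there are
   formulas phi, psi and k such that R contains inp-patterns of depth 2
   of every finite width. *)
Definition burden_ge2 (R : idomainType) : Prop :=
  exists (phi psi : GRing.formula R) (k : nat), forall n, inp_pattern2 phi psi k n.

Definition infinite_pred (R : idomainType) (F : R -> Prop) : Prop :=
  forall s : seq R, exists x, F x /\ x \notin s.

Definition inp_minimal (R : idomainType) : Prop :=
  infinite_pred (fun _ : R => True) /\ ~ burden_ge2 R.

Definition valuation_ring (R : idomainType) : Prop :=
  forall x : {fraction R}, x != 0 ->
    (exists r : R, x = tofrac r) \/ (exists r : R, x^-1 = tofrac r).

Definition max_ideal (R : idomainType) : R -> Prop := fun r => r \isn't a GRing.unit.

Definition residue_field_infinite (R : idomainType) : Prop :=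
  forall s : seq R, exists x : R, forall y, y \in s -> ~ max_ideal (x - y).

Definition subfield_of (R : idomainType) (S : R -> Prop) : Prop :=
  [/\ S 0, S 1, (forall x y, S x -> S y -> S (x - y)),
      (forall x y, S x -> S y -> S (x * y)) &
      (forall x, S x -> x != 0 -> exists y, S y /\ x * y = 1)].

From HB Require Import structures.
From mathcomp Require Import all_boot all_algebra.
From mathcomp Require Import fraction generic_quotient.
From Stdlib Require Import Classical.
From mathcomp Require Import ring.
Set Implicit Arguments. Unset Strict Implicit. Unset Printing Implicit Defensive.
Import GRing.Theory.
Local Open Scope ring_scope.

(* Suppose neither of a, b divides the other and s_1, ..., s_n have pairwise
   unit differences. Then the cosets b s_i + aR are pairwise disjoint, as are
   the cosets a s_j + bR, while b s_i + a s_j lies in the i-th coset of the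
   first row and the j-th coset of the second: an inp-pattern of depth 2 and
   width n. Inp-minimality therefore forces the divisibility order of R to be
   total, i.e. R is a valuation ring. Such sequences of every length exist
   when R has an infinite set with unit differences. *)

Lemma fraction_numden (R : idomainType) (x : {fraction R}) :
  exists a b : R, b != 0 /\ x * tofrac b = tofrac a.
Proof.
elim/quotW: x => r.
exists (\n_r), (\d_r); split; first exact: denom_ratioP.
unlock tofrac => /=.
apply: etrans; first exact: (esym (FracField.pi_mul _ _)).
apply/eqmodP; rewrite /= FracField.equivfE /FracField.mulf.
rewrite !numden_Ratio ?mulr1 ?mul1r ?oner_neq0 ?denom_ratioP //.
by rewrite mulrC.
Qed.

Lemma valuation_ring_of_dvd_total (R : idomainType) :
  (forall a b : R, (exists r, a = b * r) \/ (exists r, b = a * r)) ->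
  valuation_ring R.
Proof.
move=> dvd_total x x_neq0.
have [a [b [b_neq0 xb_eq_a]]] := fraction_numden x.
have bF_neq0 : tofrac b != 0 by rewrite tofrac_eq0.
case: (dvd_total a b) => [[r a_eq] | [r b_eq]].
  left; exists r; apply: (mulIf bF_neq0).
  by rewrite xb_eq_a a_eq tofracM mulrC.
right; exists r.
have aF_neq0 : tofrac a != 0.
  by apply: contraNneq x_neq0 => a0; rewrite -(mulfK bF_neq0 x) xb_eq_a a0 mul0r.
have xr_eq1 : x * tofrac r = 1.
  apply: (mulIf aF_neq0).
  by rewrite mul1r -mulrA [tofrac r * _]mulrC -tofracM -b_eq.
by rewrite -[LHS]mulr1 -xr_eq1 mulrA mulVf // mul1r.
Qed.

Definition unit_separated (R : comUnitRingType) (s : seq R) : Prop :=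
  pairwise (fun x y => x - y \is a GRing.unit) s.

Lemma unit_separated_nth (R : comUnitRingType) (s : seq R) i j :
  unit_separated s -> (i < size s)%N -> (j < size s)%N -> i != j ->
  nth 0 s i - nth 0 s j \is a GRing.unit.
Proof.
move=> /(pairwiseP 0) sep lt_i lt_j; rewrite neq_ltn => /orP [lt_ij | lt_ji].
  exact: sep.
by rewrite -unitrN opprB; apply: sep.
Qed.

Lemma unit_separated_seqs (R : comUnitRingType) (P : R -> Prop) :
  (forall s : seq R, (forall y, y \in s -> P y) ->
     exists x, P x /\ forall y, y \in s -> x - y \is a GRing.unit) ->
  forall n, exists s : seq R, size s = n /\ unit_separated s.
Proof.
move=> extend n.
suff [s [size_s sep _]] : exists s : seq R,
    [/\ size s = n, unit_separated s & forall y, y \in s -> P y].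
  by exists s.
elim: n => [|n [s [size_s sep Ps]]]; first by exists [::].
have [x [Px x_sep]] := extend s Ps.
exists (x :: s); split => /=.
- by rewrite size_s.
- by rewrite /unit_separated /= sep andbT; apply/allP.
- by move=> y; rewrite inE => /orP [/eqP -> | /Ps].
Qed.

Definition coset_formula (R : idomainType) (a : R) : GRing.formula R :=
  ('exists 'X_2, 'X_0 == 'X_1 + (a%:T * 'X_2))%T.

Lemma sat_coset_formula (R : idomainType) (a x c : R) :
  sat1 (coset_formula a) x [:: c] <-> exists y, x = c + a * y.
Proof. by []. Qed.

Lemma coset_row_2_inconsistent (R : idomainType) (a b : R) (s : seq R) :
  unit_separated s -> ~ (exists r, b = a * r) ->
  k_inconsistent (coset_formula a) 2 (size s) (fun i => [:: b * nth 0 s i]).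
Proof.
move=> sep b_ndvd t.
case: t => [|i [|j [|? ?]]] //=; rewrite inE !andbT => i_neq_j _ /andP [lt_i lt_j].
case=> x sat_x.
have [y1 x_eq1] := (sat_coset_formula a x (b * nth 0 s i)).1 (sat_x i (mem_head _ _)).
have [y2 x_eq2] := (sat_coset_formula a x (b * nth 0 s j)).1 (sat_x j (mem_last i [:: j])).
have ds_unit := unit_separated_nth sep lt_i lt_j i_neq_j.
apply: b_ndvd; exists ((y2 - y1) * (nth 0 s i - nth 0 s j)^-1).
have b_ds : b * (nth 0 s i - nth 0 s j) = a * (y2 - y1).
  apply/eqP; rewrite -subr_eq0.
  have -> : b * (nth 0 s i - nth 0 s j) - a * (y2 - y1) =
     (b * nth 0 s i + a * y1) - (b * nth 0 s j + a * y2) by ring.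
  by rewrite -x_eq1 -x_eq2 subrr.
by rewrite mulrA -b_ds mulrK.
Qed.

Lemma burden_ge2_of_dvd_incomparable (R : idomainType) (a b : R) :
  ~ (exists r, a = b * r) -> ~ (exists r, b = a * r) ->
  (forall n, exists s : seq R, size s = n /\ unit_separated s) ->
  burden_ge2 R.
Proof.
move=> a_ndvd b_ndvd seqs.
exists (coset_formula a), (coset_formula b), 2%N => n.
have [s [<- sep]] := seqs n.
exists (fun i => [:: b * nth 0 s i]), (fun j => [:: a * nth 0 s j]); split.
- exact: coset_row_2_inconsistent.
- exact: coset_row_2_inconsistent.
- move=> i j _ _; exists (b * nth 0 s i + a * nth 0 s j).
  by split; apply/sat_coset_formula; [exists (nth 0 s j) | exists (nth 0 s i); rewrite addrC].
Qed.

Lemma valuation_ring_of_unit_separated_seqs (R : idomainType) :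
  ~ burden_ge2 R ->
  (forall n, exists s : seq R, size s = n /\ unit_separated s) ->
  valuation_ring R.
Proof.
move=> burden_lt2 seqs; apply: valuation_ring_of_dvd_total => a b.
case: (classic (exists r, a = b * r)) => [|a_ndvd]; first by left.
case: (classic (exists r, b = a * r)) => [|b_ndvd]; first by right.
by case: burden_lt2; apply: burden_ge2_of_dvd_incomparable a_ndvd b_ndvd seqs.
Qed.

Theorem mainTheorem8 (R : idomainType) (hR : inp_minimal R) :
  [/\ (forall F : R -> Prop, infinite_pred F ->
         (forall x y, F x -> F y -> x - y \is a GRing.unit \/ x - y = 0) ->
         valuation_ring R),
      (residue_field_infinite R -> valuation_ring R) &
      (forall S : R -> Prop, subfield_of S -> infinite_pred S -> valuation_ring R)].
Proof.
case: hR => _ burden_lt2.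
have from_set : forall F : R -> Prop, infinite_pred F ->
    (forall x y, F x -> F y -> x - y \is a GRing.unit \/ x - y = 0) ->
    valuation_ring R.
  move=> F F_inf F_sep; apply: valuation_ring_of_unit_separated_seqs => //.
  apply: (unit_separated_seqs (P := F)) => s Fs.
  have [x [Fx x_notin]] := F_inf s.
  exists x; split => // y ys; case: (F_sep x y Fx (Fs y ys)) => // /eqP.
  by rewrite subr_eq0 => /eqP x_eq_y; rewrite x_eq_y ys in x_notin.
split => //.
- move=> res_inf; apply: valuation_ring_of_unit_separated_seqs => //.
  apply: (unit_separated_seqs (P := fun _ => True)) => s _.
  have [x x_sep] := res_inf s.
  by exists x; split => // y /x_sep /negP; rewrite negbK.
- move=> S [_ _ S_sub _ S_inv] S_inf; apply: (from_set S S_inf) => x y Sx Sy.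
  have [->|d_neq0] := eqVneq (x - y) 0; first by right.
  left.
  have [z [_ dz_eq1]] := S_inv _ (S_sub _ _ Sx Sy) d_neq0.
  by apply/unitrPr; exists z.
Qed.
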